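(* Let $(Y^*,Y,X,W)$ be random variables with $Y^*\in\{0,1\}$ (true, unobserved outcome), $Y\in\{0,1\}$ (observed, possibly misreported outcome), covariates $X\in\mathcal X$, and $W$ taking values in a finite set of real numbers $\mathcal W=\{w_1,\dots,w_l\}$. Write $p^*(x)=\Pr(Y^*=1\mid X=x)$, $p_W(x,w)=\Pr(Y=1\mid X=x,W=w)$, and $$\underline p_w(x,w)=\inf_{\tilde w\in\mathcal W,\ \tilde w\le w}p_W(x,\tilde w),\qquad \bar p_w(x,w)=\sup_{\tilde w\in\mathcal W,\ \tilde w\le w}p_W(x,\tilde w).$$ Assume: (i) (Exclusion) $\Pr(Y^*=1\mid X=x,W=w)=p^*(x)$ for all $x\in\mathcal X$, $w\in\mathcal W$; (ii) (Monotonicity) for all $x\in\mathcal X$, $y\in\{0,1\}$ and $w_1>w_2$ in $\mathcal W$, $\Pr(Y=1-y\mid Y^*=y,x,w_1)\le\Pr(Y=1-y\mid Y^*=y,x,w_2)$; (iii) (Degree of misreporting) $\Pr(Y=1\mid Y^*=0,x,w)+\Pr(Y=0\mid Y^*=1,x,w)\le 1$ for all $x\in\mathcal X$, $w\in\mathcal W$; (iv) (Boundary condition) $0<p_W(x,w)<1$ for all $x\in\mathcal X$, $w\in\mathcal W$. Then for every $x\in\mathcal X$, $p^*(x)\in[L_2(x),U_2(x)]$, where $$L_2(x)=\sup_{w\in\mathcal W}\left\{\frac{p_W(x,w)-\underline p_w(x,w)}{1-\underline p_w(x,w)}\right\},\qquad U_2(x)=\inf_{w\in\mathcal W}\left\{\frac{p_W(x,w)}{\bar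 p_w(x,w)}\right\}.$$ Moreover, when $W$ is binary (i.e. $\mathcal W$ has two elements), these bounds are sharp (no tighter bounds on $p^*(x)$ are implied by the assumptions and the distribution of the observed variables $(Y,X,W)$).
   Context: Conditioning on $x,w$ means conditioning on $X=x,W=w$. $W$ is an instrument that affects only the misreporting probabilities $\Pr(Y=1-y\mid Y^*=y,\cdot)$, not the true outcome. *)

(* Pointwise (in x, w) model of the conditional distribution
   of (Y*, Y) given X = x, W = w, parametrized by
     q x w  = Pr(Y* = 1 | X = x, W = w)
     a0 x w = Pr(Y = 1 | Y* = 0, X = x, W = w)   (misreporting of a 0)
     a1 x w = Pr(Y = 0 | Y* = 1, X = x, W = w)   (misreporting of a 1)
   and pstar x = Pr(Y* = 1 | X = x).  The support of W is a finite
   duplicate-free nonempty list of reals Wset. *)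
From HB Require Import structures.
From mathcomp Require Import all_boot all_order all_algebra.
Set Implicit Arguments. Unset Strict Implicit. Unset Printing Implicit Defensive.
Import Order.TTheory GRing.Theory Num.Theory.
Local Open Scope ring_scope.

Section Defs.
Variables (R : realFieldType) (X : Type).

Definition valid_model (Wset : seq R) (pstar : X -> R) (q a0 a1 : X -> R -> R) :=
  (forall x, 0 <= pstar x <= 1) /\
  (forall x w, w \in Wset -> [/\ 0 <= q x w <= 1, 0 <= a0 x w <= 1 & 0 <= a1 x w <= 1]).

(* observed p_W(x,w) = Pr(Y = 1 | X = x, W = w), by the law of total probability *)
Definition pW (q a0 a1 : X -> R -> R) (x : X) (w : R) : R :=
  a0 x w * (1 - q x w) + (1 - a1 x w) * q x w.

(* underline p_w(x,w) = min_{w' in Wset, w' <= w} p(x,w'); w itself is in the range *)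
Definition plow (Wset : seq R) (p : X -> R -> R) (x : X) (w : R) : R :=
  \big[Num.min/p x w]_(v <- Wset | v <= w) p x v.

Definition pup (Wset : seq R) (p : X -> R -> R) (x : X) (w : R) : R :=
  \big[Num.max/p x w]_(v <- Wset | v <= w) p x v.

(* L2(x) = max_{w in Wset} (p(x,w) - plow(x,w)) / (1 - plow(x,w));
   the seed of the big max is one of the terms (Wset nonempty), so this is the max *)
Definition L2 (Wset : seq R) (p : X -> R -> R) (x : X) : R :=
  let f w := (p x w - plow Wset p x w) / (1 - plow Wset p x w) in
  \big[Num.max/f (head 0 Wset)]_(w <- Wset) f w.

Definition U2 (Wset : seq R) (p : X -> R -> R) (x : X) : R :=
  let f w := p x w / pup Wset p x w in
  \big[Num.min/f (head 0 Wset)]_(w <- Wset) f w.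

Definition assumptions (Wset : seq R) (pstar : X -> R) (q a0 a1 : X -> R -> R) :=
  [/\
      (forall x w, w \in Wset -> q x w = pstar x),
      (forall x w1 w2, w1 \in Wset -> w2 \in Wset -> w2 < w1 ->
         a0 x w1 <= a0 x w2 /\ a1 x w1 <= a1 x w2),
      (forall x w, w \in Wset -> a0 x w + a1 x w <= 1) &
      (forall x w, w \in Wset -> 0 < pW q a0 a1 x w < 1)].

End Defs.

(* Under exclusion, p_W(x,w) = a0(w) (1 - pstar) + (1 - a1(w)) pstar, with misreporting
   rates a0, a1 nonincreasing in w and a0 + a1 <= 1.  Comparing w with a smaller
   instrument value v gives p_W(w) - p_W(v) <= pstar (1 - p_W(v)) and
   pstar p_W(v) <= p_W(w); taking for v the value that attains the minimum (resp.
   maximum) defining underline p_w (resp. bar p_w) yields L2 <= pstar <= U2.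
   For W = {lo < hi} and t in [L2, U2], a model with pstar(x) = t reproducing p_W is
   obtained by making the instrument uninformative at lo (a0 = p_W(lo),
   a1 = 1 - p_W(lo)) and keeping one rate constant across lo and hi: a0 when
   p_W(hi) >= p_W(lo) and t > 0, a1 otherwise; the other rate is then forced by
   p_W(hi), and the two pairwise inequalities above say exactly that it is
   admissible. *)

From HB Require Import structures.
From Stdlib Require Import ClassicalEpsilon.
From mathcomp Require Import all_boot all_order all_algebra.
From mathcomp Require Import ring lra.
Import Order.TTheory GRing.Theory Num.Theory.
Local Open Scope ring_scope.

Lemma big_selective_attained (T : Type) (I : eqType) (op : T -> T -> T)
    (r : seq I) (P : pred I) (F : I -> T) (i0 : I) :
  (forall a b, op a b = a \/ op a b = b) -> i0 \in r -> P i0 ->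
  exists2 i, (i \in r) && P i & \big[op/F i0]_(i <- r | P i) F i = F i.
Proof.
move=> op_sel r_i0 P_i0; rewrite big_seq_cond.
elim/big_ind: _ => [|_ _ [i Pi ->] [j Pj ->]|i Pi]; last by exists i.
- by exists i0; rewrite ?r_i0.
- by have [->|->] := op_sel (F i) (F j); [exists i | exists j].
Qed.

Definition pY {R : pzRingType} (a0 a1 p : R) : R := a0 * (1 - p) + (1 - a1) * p.

Section ObservedRate.
Variable R : realDomainType.
Implicit Types (p a0v a1v a0w a1w : R).

Lemma pY_increment_le p a0v a1v a0w a1w :
  0 <= p <= 1 -> a0w <= a0v -> a1w <= a1v -> 0 <= a1w -> a0v + a1v <= 1 ->
  pY a0w a1w p - pY a0v a1v p <= p * (1 - pY a0v a1v p).
Proof.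
move=> /andP[p_ge0 p_le1] a0_le a1_le a1w_ge0 a_le1.
rewrite -subr_ge0 /pY.
have -> : p * (1 - (a0v * (1 - p) + (1 - a1v) * p)) -
          (a0w * (1 - p) + (1 - a1w) * p - (a0v * (1 - p) + (1 - a1v) * p)) =
          (1 - p) * (a0v - a0w) + p * (1 - p) * (1 - a1v - a0v) + a1w * p by ring.
by rewrite !addr_ge0 ?mulr_ge0 ?subr_ge0 // lerBrDr.
Qed.

Lemma pY_scaled_le p a0v a1v a0w a1w :
  0 <= p <= 1 -> 0 <= a0w -> a1w <= a1v -> a0v + a1v <= 1 ->
  p * pY a0v a1v p <= pY a0w a1w p.
Proof.
move=> /andP[p_ge0 p_le1] a0w_ge0 a1_le a_le1.
rewrite -subr_ge0 /pY.
have -> : a0w * (1 - p) + (1 - a1w) * p - p * (a0v * (1 - p) + (1 - a1v) * p) =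
          a0w * (1 - p) + p * (a1v - a1w) + p * (1 - p) * (1 - a1v - a0v) by ring.
by rewrite !addr_ge0 ?mulr_ge0 ?subr_ge0 // lerBrDr.
Qed.

End ObservedRate.

Section Extrema.
Context {R : realFieldType} {X : Type} {Wset : seq R} {p : X -> R -> R}.

Lemma plow_attained x {w} : w \in Wset ->
  exists2 v, (v \in Wset) && (v <= w) & plow Wset p x w = p x v.
Proof.
by move=> Ww; apply: big_selective_attained => // a b; rewrite minEle; case: ifP; auto.
Qed.

Lemma pup_attained x {w} : w \in Wset ->
  exists2 v, (v \in Wset) && (v <= w) & pup Wset p x w = p x v.
Proof.
by move=> Ww; apply: big_selective_attained => // a b; rewrite maxEle; case: ifP; auto.
Qed.

Lemma L2_le x c : Wset != [::] ->
  (forall w, w \in Wset -> (p x w - plow Wset p x w) / (1 - plow Wset p x w) <= c) ->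
  L2 Wset p x <= c.
Proof.
case: Wset => [|w0 s] // _ le_c; rewrite /L2 big_seq.
by apply: bigmax_le => [|w]; apply: le_c; rewrite ?mem_head.
Qed.

Lemma U2_ge x c : Wset != [::] ->
  (forall w, w \in Wset -> c <= p x w / pup Wset p x w) -> c <= U2 Wset p x.
Proof.
case: Wset => [|w0 s] // _ c_le; rewrite /U2 big_seq.
by apply: le_bigmin => [|w]; apply: c_le; rewrite ?mem_head.
Qed.

Hypothesis p_in01 : forall x w, w \in Wset -> 0 < p x w < 1.

Lemma L2_ge_increment x {v w} : v \in Wset -> w \in Wset -> v <= w ->
  (p x w - p x v) / (1 - p x v) <= L2 Wset p x.
Proof.
move=> Wv Ww vw; rewrite /L2 /=; apply: le_trans (le_bigmax_seq _ _ _ _ Ww isT).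
set c := plow Wset p x w.
have c_le_v : c <= p x v by apply: ge_bigmin_seq.
have c_le_w : c <= p x w by apply: bigmin_le_id.
have /andP[_ pv_lt1] := p_in01 x v Wv; have /andP[_ pw_lt1] := p_in01 x w Ww.
rewrite ler_pdivrMr ?subr_gt0 // mulrAC ler_pdivlMr ?subr_gt0 //; last by lra.
(* the map [c |-> (p w - c) / (1 - c)] is nonincreasing below 1 *)
by rewrite -subr_ge0 (_ : _ - _ = (p x v - c) * (1 - p x w)); [nra | ring].
Qed.

Lemma U2_le_ratio x {v w} : v \in Wset -> w \in Wset -> v <= w ->
  U2 Wset p x <= p x w / p x v.
Proof.
move=> Wv Ww vw; rewrite /U2 /=; apply: le_trans (ge_bigmin_seq _ _ _ _ Ww isT) _.
have v_le_c : p x v <= pup Wset p x w by apply: le_bigmax_seq.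
have /andP[pv_gt0 _] := p_in01 x v Wv; have /andP[pw_gt0 _] := p_in01 x w Ww.
apply: ler_wpM2l; first exact: ltW.
by rewrite lef_pV2 ?posrE // (lt_le_trans pv_gt0).
Qed.

End Extrema.

Section Bounds.
Context {R : realFieldType} {X : Type} {Wset : seq R} {pstar : X -> R}
  {q a0 a1 : X -> R -> R}.
Hypotheses (model : valid_model Wset pstar q a0 a1)
  (assum : assumptions Wset pstar q a0 a1).

Lemma pW_pY x w : w \in Wset -> pW q a0 a1 x w = pY (a0 x w) (a1 x w) (pstar x).
Proof. by case: assum => excl _ _ _ Ww; rewrite /pW /pY excl. Qed.

Lemma misreport_antitone x {v w} : v \in Wset -> w \in Wset -> v <= w ->
  a0 x w <= a0 x v /\ a1 x w <= a1 x v.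
Proof.
case: assum => _ mono _ _ Wv Ww; rewrite le_eqVlt => /predU1P[->|]; first by [].
exact: mono.
Qed.

Lemma pW_increment_le x v w : v \in Wset -> w \in Wset -> v <= w ->
  pW q a0 a1 x w - pW q a0 a1 x v <= pstar x * (1 - pW q a0 a1 x v).
Proof.
move=> Wv Ww vw; have [a0_le a1_le] := misreport_antitone x Wv Ww vw.
case: model => pstar01 rates01; case: assum => _ _ degree _.
have [_ _ /andP[a1w_ge0 _]] := rates01 x w Ww.
by rewrite !pW_pY //; apply: pY_increment_le => //; apply: degree.
Qed.

Lemma pW_scaled_le x v w : v \in Wset -> w \in Wset -> v <= w ->
  pstar x * pW q a0 a1 x v <= pW q a0 a1 x w.
Proof.
move=> Wv Ww vw; have [_ a1_le] := misreport_antitone x Wv Ww vw.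
case: model => pstar01 rates01; case: assum => _ _ degree _.
have [_ /andP[a0w_ge0 _] _] := rates01 x w Ww.
by rewrite !pW_pY //; apply: pY_scaled_le => //; apply: degree.
Qed.

Lemma L2_le_pstar x : Wset != [::] -> L2 Wset (pW q a0 a1) x <= pstar x.
Proof.
case: assum => _ _ _ pW01 W0; apply: L2_le => // w Ww.
have [v /andP[Wv vw] ->] := plow_attained (p := pW q a0 a1) x Ww.
have /andP[_ pv_lt1] := pW01 x v Wv.
by rewrite ler_pdivrMr ?subr_gt0 // pW_increment_le.
Qed.

Lemma pstar_le_U2 x : Wset != [::] -> pstar x <= U2 Wset (pW q a0 a1) x.
Proof.
case: assum => _ _ _ pW01 W0; apply: U2_ge => // w Ww.
have [v /andP[Wv vw] ->] := pup_attained (p := pW q a0 a1) x Ww.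
have /andP[pv_gt0 _] := pW01 x v Wv.
by rewrite ler_pdivlMr // pW_scaled_le.
Qed.

End Bounds.

Section LocalModel.
Context {R : realFieldType}.
Implicit Types (c t P : R).

Lemma const_a0_rates c t P : 0 < c < 1 -> 0 < t -> c <= P -> P - c <= t * (1 - c) ->
  let a1 := 1 - (P - c * (1 - t)) / t in
  [/\ 0 <= c <= 1, 0 <= a1 <= 1, c + a1 <= 1 & pY c a1 t = P].
Proof.
move=> /andP[c_gt0 c_lt1] t_gt0 c_le P_le a1.
have a1_t : (1 - a1) * t = P - c * (1 - t) by rewrite /a1 subKr divfK ?gt_eqF.
have : c * t <= (1 - a1) * t <= 1 * t by rewrite a1_t; apply/andP; split; nra.
rewrite !ler_pM2r // => /andP[a1_le a1_ge0].
by split; [lra | lra | lra | rewrite /pY a1_t; ring].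
Qed.

Lemma const_a1_rates c t P : 0 < c < 1 -> t < 1 -> c * t <= P -> P <= c ->
  let a0 := (P - c * t) / (1 - t) in
  [/\ 0 <= a0 <= 1, 0 <= 1 - c <= 1, a0 + (1 - c) <= 1 & pY a0 (1 - c) t = P].
Proof.
move=> /andP[c_gt0 c_lt1] t_lt1 le_P P_le a0.
have t'_gt0 : 0 < 1 - t by rewrite subr_gt0.
have a0_t : a0 * (1 - t) = P - c * t by rewrite /a0 divfK ?gt_eqF.
have : 0 * (1 - t) <= a0 * (1 - t) <= c * (1 - t) by rewrite a0_t; apply/andP; split; nra.
rewrite !ler_pM2r // => /andP[a0_ge0 a0_le].
by split; [lra | lra | lra | rewrite /pY a0_t; ring].
Qed.

Definition local_model (Wset : seq R) (Pobs : R -> R) t (A0 A1 : R -> R) :=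
  (forall w, w \in Wset ->
     [/\ 0 <= A0 w <= 1, 0 <= A1 w <= 1, A0 w + A1 w <= 1 & pY (A0 w) (A1 w) t = Pobs w]) /\
  (forall w1 w2, w1 \in Wset -> w2 \in Wset -> w2 < w1 -> A0 w1 <= A0 w2 /\ A1 w1 <= A1 w2).

Section Binary.
Context {Wset : seq R} {lo hi : R} {Pobs : R -> R} {t : R}.
Hypotheses (W_sub : {subset Wset <= [:: lo; hi]}) (lo_lt_hi : lo < hi).
Hypothesis (Plo01 : 0 < Pobs lo < 1).

Lemma binary_antitone (A0 A1 : R -> R) : A0 hi <= A0 lo -> A1 hi <= A1 lo ->
  forall w1 w2, w1 \in Wset -> w2 \in Wset -> w2 < w1 -> A0 w1 <= A0 w2 /\ A1 w1 <= A1 w2.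
Proof.
move=> A0_le A1_le w1 w2 /W_sub + /W_sub; rewrite !inE.
move=> /predU1P[->|/eqP->] /predU1P[->|/eqP->]; rewrite ?ltxx //.
by move/(lt_trans lo_lt_hi); rewrite ltxx.
Qed.

Lemma binary_local_model_const_a0 : 0 < t -> Pobs lo <= Pobs hi ->
  Pobs hi - Pobs lo <= t * (1 - Pobs lo) ->
  local_model Wset Pobs t (fun=> Pobs lo) (fun w => 1 - (Pobs w - Pobs lo * (1 - t)) / t).
Proof.
move=> t_gt0 lo_le_hi hi_le; split=> [w /W_sub|]; last first.
  apply: binary_antitone => //.
  by rewrite lerD2l lerN2 ler_pM2r ?invr_gt0 // lerD2r.
rewrite !inE => /predU1P[->|/eqP->]; apply: const_a0_rates => //.
by rewrite subrr mulr_ge0 ?subr_ge0 ?ltW //; case/andP: Plo01.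
Qed.

Lemma binary_local_model_const_a1 : t < 1 -> Pobs hi <= Pobs lo ->
  Pobs lo * t <= Pobs hi ->
  local_model Wset Pobs t (fun w => (Pobs w - Pobs lo * t) / (1 - t)) (fun=> 1 - Pobs lo).
Proof.
move=> t_lt1 hi_le_lo hi_ge; split=> [w /W_sub|]; last first.
  apply: binary_antitone => //.
  by rewrite ler_pM2r ?invr_gt0 ?subr_gt0 // lerD2r.
rewrite !inE => /predU1P[->|/eqP->]; apply: const_a1_rates => //.
by case/andP: Plo01 => Plo_gt0 _; rewrite ler_piMr ?ltW.
Qed.

Lemma binary_local_model : 0 <= t <= 1 ->
  Pobs hi - Pobs lo <= t * (1 - Pobs lo) -> Pobs lo * t <= Pobs hi ->
  exists A0 A1, local_model Wset Pobs t A0 A1.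
Proof.
move=> /andP[t_ge0 t_le1] inc_le scaled_le.
have [/andP[lo_le_hi t_gt0]|] := boolP ((Pobs lo <= Pobs hi) && (0 < t)).
  by do 2!eexists; apply: binary_local_model_const_a0.
have /andP[Plo_gt0 Plo_lt1] := Plo01.
rewrite negb_and -ltNge -leNgt => /orP not_a0.
have [hi_le_lo t_lt1] : Pobs hi <= Pobs lo /\ t < 1 by case: not_a0 => ?; split; nra.
by do 2!eexists; apply: binary_local_model_const_a1.
Qed.

End Binary.

End LocalModel.

Definition in_identified_set {R : realFieldType} {X : Type} (Wset : seq R)
    (p : X -> R -> R) (x : X) (t : R) :=
  exists (pstar' : X -> R) (q' a0' a1' : X -> R -> R),
    [/\ valid_model Wset pstar' q' a0' a1', assumptions Wset pstar' q' a0' a1',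
        (forall x' w, w \in Wset -> pW q' a0' a1' x' w = p x' w) & pstar' x = t].

Definition splice {X T : Type} (x : X) (a : T) (g : X -> T) : X -> T :=
  fun x' => if excluded_middle_informative (x' = x) then a else g x'.

Section Sharpness.
Context {R : realFieldType} {X : Type} {Wset : seq R} {pstar : X -> R}
  {q a0 a1 : X -> R -> R}.
Hypotheses (model : valid_model Wset pstar q a0 a1)
  (assum : assumptions Wset pstar q a0 a1).

Lemma local_model_identified x t A0 A1 : 0 <= t <= 1 ->
  local_model Wset (pW q a0 a1 x) t A0 A1 -> in_identified_set Wset (pW q a0 a1) x t.
Proof.
move=> t01 [loc anti_loc]; case: model => pstar01 rates01.
case: assum => excl anti degree pW01.
pose q' := splice x (fun=> t) q; pose a0' := splice x A0 a0; pose a1' := splice x A1 a1.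
have pW_eq x' w : w \in Wset -> pW q' a0' a1' x' w = pW q a0 a1 x' w.
  rewrite /pW /q' /a0' /a1' /splice; case: excluded_middle_informative => [e|//] /= Ww.
  by rewrite e; have [_ _ _ loc_w] := loc w Ww; exact: loc_w.
exists (splice x t pstar), q', a0', a1'; split.
- split=> [x'|x' w Ww]; rewrite /q' /a0' /a1' /splice;
    case: excluded_middle_informative => [e|ne] //=.
  + by have [] := loc w Ww.
  + exact: rates01.
- split=> [x' w Ww|x' w1 w2 Ww1 Ww2|x' w Ww|x' w Ww]; last by rewrite pW_eq // pW01.
  + by rewrite /q' /splice; case: excluded_middle_informative => [e|ne] //=; apply: excl.
  + rewrite /a0' /a1' /splice; case: excluded_middle_informative => [e|ne] /=.
    * exact: anti_loc.
    * exact: anti.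
  + rewrite /a0' /a1' /splice; case: excluded_middle_informative => [e|ne] /=.
    * by have [] := loc w Ww.
    * exact: degree.
- exact: pW_eq.
- by rewrite /splice; case: excluded_middle_informative.
Qed.

Lemma binary_sharp {lo hi x t} : {subset Wset <= [:: lo; hi]} ->
  lo \in Wset -> hi \in Wset -> lo < hi ->
  L2 Wset (pW q a0 a1) x <= t <= U2 Wset (pW q a0 a1) x ->
  in_identified_set Wset (pW q a0 a1) x t.
Proof.
move=> W_sub Wlo Whi lo_lt_hi /andP[L2_le_t t_le_U2].
case: assum => _ _ _ pW01; have /andP[Plo_gt0 Plo_lt1] := pW01 x lo Wlo.
have L2_ge0 : 0 <= L2 Wset (pW q a0 a1) x.
  by have := L2_ge_increment pW01 x Wlo Wlo (lexx lo); rewrite subrr mul0r.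
have U2_le1 : U2 Wset (pW q a0 a1) x <= 1.
  by have := U2_le_ratio pW01 x Wlo Wlo (lexx lo); rewrite divff ?gt_eqF.
have t01 : 0 <= t <= 1 by rewrite (le_trans L2_ge0) ?(le_trans t_le_U2).
have inc_le : pW q a0 a1 x hi - pW q a0 a1 x lo <= t * (1 - pW q a0 a1 x lo).
  rewrite -ler_pdivrMr ?subr_gt0 //.
  exact: le_trans (L2_ge_increment pW01 x Wlo Whi (ltW lo_lt_hi)) L2_le_t.
have scaled_le : pW q a0 a1 x lo * t <= pW q a0 a1 x hi.
  rewrite mulrC -ler_pdivlMr //.
  exact: le_trans t_le_U2 (U2_le_ratio pW01 x Wlo Whi (ltW lo_lt_hi)).
have [A0 [A1 loc]] := binary_local_model W_sub lo_lt_hi (pW01 x lo Wlo) t01 inc_le scaled_le.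
exact: local_model_identified loc.
Qed.

End Sharpness.

Theorem proposition2 (R : realFieldType) (X : Type) (Wset : seq R)
  (pstar : X -> R) (q a0 a1 : X -> R -> R) :
  uniq Wset -> Wset != [::] ->
  valid_model Wset pstar q a0 a1 ->
  assumptions Wset pstar q a0 a1 ->
  (* bounds *)
  (forall x : X, L2 Wset (pW q a0 a1) x <= pstar x <= U2 Wset (pW q a0 a1) x) /\
  (* sharpness for binary W *)
  (size Wset = 2%N ->
   forall (x : X) (t : R),
     L2 Wset (pW q a0 a1) x <= t <= U2 Wset (pW q a0 a1) x ->
     exists (pstar' : X -> R) (q' a0' a1' : X -> R -> R),
       [/\ valid_model Wset pstar' q' a0' a1',
           assumptions Wset pstar' q' a0' a1',
           (forall x' w, w \in Wset -> pW q' a0' a1' x' w = pW q a0 a1 x' w) &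
           pstar' x = t]).
Proof.
move=> W_uniq W_nil model assum; split=> [x|].
  by rewrite (L2_le_pstar model assum) ?(pstar_le_U2 model assum).
case: Wset W_uniq W_nil model assum => [|w1 [|w2 []]] // W_uniq _ model assum _ x t t_in.
have W1 : w1 \in [:: w1; w2] by rewrite mem_head.
have W2 : w2 \in [:: w1; w2] by rewrite !inE eqxx orbT.
have [w1_lt_w2|w2_lt_w1|w1_eq_w2] := ltgtP w1 w2.
- exact: (binary_sharp model assum (fun _ => id) W1 W2 w1_lt_w2 t_in).
- by apply: (binary_sharp model assum _ W2 W1 w2_lt_w1 t_in) => w; rewrite !inE orbC.
- by move: W_uniq; rewrite w1_eq_w2 /= mem_head.
Qed.
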